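(* Consider $\tau=t^3$ on Minkowski space $\mathbb{M}^{n+1}=(\mathbb{R}\times\mathbb{R}^n,-dt^2+\sum_i(dx^i)^2)$. Then: (1) $\hat{d}_\tau$ fails to be definite; in particular, for any two points $p,q$ in the slice $\{t=0\}$, $\hat{d}_\tau(p,q)=0$; (2) $\hat{d}_\tau$ fails to encode the causal structure; in particular, for any two points $p=(t_p,p_S)$ and $q=(t_q,q_S)$ with $t_p<0<t_q$, we have $\hat{d}_\tau(p,q)=\tau(q)-\tau(p)$.
   Context: Minkowski space is time-oriented by $\partial_t$; $\tau=t^3$ is strictly increasing along future causal curves. A piecewise causal curve $\beta:[a,b]\to M$ has a partition $a=s_0<\dots<s_k=b$ with each restriction a smooth future or past causal curve (all tangents, including one-sided ones, future or past pointing causal); its null length is $\hat{L}_\tau(\beta)=\sum_i|\tau(\beta(s_i))-\tau(\beta(s_{i-1}))|$, and $\hat{d}_\tau(p,q)=\inf\{\hat{L}_\tau(\beta):\beta$ piecewise causal from $p$ to $q\}$. *)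

From HB Require Import structures.
From mathcomp Require Import all_boot all_order all_algebra.
From mathcomp Require Import all_classical all_reals all_analysis.
Set Implicit Arguments. Unset Strict Implicit. Unset Printing Implicit Defensive.
Import Order.TTheory GRing.Theory Num.Theory.
Local Open Scope classical_set_scope.
Local Open Scope ring_scope.

Definition mpoint (R : realType) (n : nat) : Type := (R * ('I_n -> R))%type.

Definition tau (R : realType) (n : nat) (p : mpoint R n) : R := p.1 ^+ 3.

Definition smooth_fun (R : realType) (g : R -> R) : Prop :=
  forall (k : nat) (x : R), derivable (derive1n k g) x 1.

(* beta restricted to [a,b] is a smooth future (fut = true) or past (fut = false)
   causal curve: each coordinate agrees on [a,b] with a smooth function on R
   (so that all tangents, including the one-sided ones at the endpoints, are
   given by the derivatives of these extensions), and every tangent vector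
   (v0, v) satisfies |v|^2 <= v0^2 with v0 > 0 (future) resp. v0 < 0 (past).
   (The sign condition on v0 makes the vector nonzero.) *)
Definition smooth_causal_piece (R : realType) (n : nat)
    (beta : R -> mpoint R n) (a b : R) (fut : bool) : Prop :=
  exists (gt : R -> R) (gx : 'I_n -> R -> R),
    smooth_fun gt /\ (forall i, smooth_fun (gx i)) /\
    (forall s, a <= s <= b -> (beta s).1 = gt s /\ forall i, (beta s).2 i = gx i s) /\
    (forall s, a <= s <= b ->
       \sum_(i < n) (derive1 (gx i) s) ^+ 2 <= (derive1 gt s) ^+ 2 /\
       (if fut then 0 < derive1 gt s else derive1 gt s < 0)).

Definition piecewise_causal (R : realType) (n : nat) (beta : R -> mpoint R n)
    (a b : R) (k : nat) (s : nat -> R) : Prop :=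
  a < b /\ s 0%N = a /\ s k = b /\
  (forall i, (i < k)%N -> s i < s i.+1) /\
  (forall i, (i < k)%N -> exists fut, smooth_causal_piece beta (s i) (s i.+1) fut).

Definition null_length (R : realType) (n : nat) (beta : R -> mpoint R n)
    (k : nat) (s : nat -> R) : R :=
  \sum_(i < k) `| tau (beta (s i.+1)) - tau (beta (s i)) |.

Definition dhat (R : realType) (n : nat) (p q : mpoint R n) : R :=
  inf [set L : R | exists (beta : R -> mpoint R n) (a b : R) (k : nat) (s : nat -> R),
         piecewise_causal beta a b k s /\ beta a = p /\ beta b = q /\
         L = null_length beta k s].

From HB Require Import structures.
From mathcomp Require Import all_boot all_order all_algebra.
From mathcomp Require Import all_classical all_reals all_analysis.
From mathcomp Require Import ring lra.
Set Implicit Arguments. Unset Strict Implicit. Unset Printing Implicit Defensive.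
Import Order.TTheory GRing.Theory Num.Theory.
Local Open Scope classical_set_scope.
Local Open Scope ring_scope.

(* Telescoping bounds the null length of any piecewise causal curve from p to q
   below by |tau q - tau p|.  Conversely, since d(t^3) vanishes at t = 0, a
   zigzag bouncing between the slices t = 0 and t = h while drifting spatially
   from x to y in 2N steps is causal once h ~ 1/N, and has null length
   2N h^3 = O(1/N^2).  So points of {t = 0} are at distance 0, and for
   t_p < 0 < t_q the path going straight to the slice, zigzagging, and going
   straight up to q has null length tau q - tau p + o(1). *)

Section Segment.
Variable R : realType.

Definition segment (a a' : R) (j : nat) (s : R) : R := a + (s - j%:R) * (a' - a).

Lemma segment_left a a' j : segment a a' j j%:R = a.
Proof. by rewrite /segment subrr mul0r addr0. Qed.

Lemma segment_right a a' j : segment a a' j j.+1%:R = a'.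
Proof. by rewrite /segment -natr1 addrAC subrr add0r mul1r addrC subrK. Qed.

Lemma derivable_segment a a' j s : derivable (segment a a' j) s 1.
Proof. by apply: derivableD => //; apply: derivableM => //; apply: derivableB. Qed.

Lemma derive1_segment a a' j : derive1 (segment a a' j) = cst (a' - a).
Proof.
apply/funext => s; rewrite derive1E deriveD // deriveMr // deriveB //.
by rewrite derive_id !derive_cst subr0 add0r mulr1.
Qed.

Lemma derive1n_cst0 k : derive1n k (cst (0 : R)) = cst 0.
Proof. by elim: k => // k IH; rewrite derive1nS IH; apply/funext => s; rewrite derive1_cst. Qed.

Lemma smooth_segment a a' j : smooth_fun (segment a a' j).
Proof.
case=> [|k] s; first exact: derivable_segment.
rewrite derive1Sn derive1_segment.
case: k => [|k]; first exact: derivable_cst.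
rewrite derive1Sn; have -> : derive1 (cst (a' - a)) = cst (0 : R).
  by apply/funext => x; rewrite derive1_cst.
by rewrite derive1n_cst0; exact: derivable_cst.
Qed.

End Segment.

Section Polygon.
Variables (R : realType) (n : nat).
Implicit Types (u v : mpoint R n) (P : nat -> mpoint R n).

Definition polygon_piece P j (s : R) : mpoint R n :=
  (segment (P j).1 (P j.+1).1 j s, fun i => segment ((P j).2 i) ((P j.+1).2 i) j s).

Definition polygon P (s : R) : mpoint R n := polygon_piece P (Num.truncn s) s.

Lemma polygon_nat P j : polygon P j%:R = P j.
Proof.
rewrite /polygon natrK /polygon_piece segment_left.
by case: (P j) => t x /=; congr pair; apply/funext => i; rewrite segment_left.
Qed.

Lemma polygon_pieceE P j s : j%:R <= s <= j.+1%:R -> polygon P s = polygon_piece P j s.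
Proof.
case/andP => js sj1; have [sj1'|] := ltP s j.+1%:R.
  by rewrite /polygon (@Num.Theory.truncn_def _ s j) // js sj1'.
move=> /(conj sj1)/andP; rewrite -eq_le => /eqP ->.
rewrite polygon_nat /polygon_piece segment_right.
by case: (P j.+1) => t x /=; congr pair; apply/funext => i; rewrite segment_right.
Qed.

Definition causal_chord u v : Prop :=
  u.1 != v.1 /\ \sum_(i < n) (v.2 i - u.2 i) ^+ 2 <= (v.1 - u.1) ^+ 2.

Definition causal_chain P (k : nat) : Prop :=
  (0 < k)%N /\ forall i, (i < k)%N -> causal_chord (P i) (P i.+1).

Lemma smooth_causal_piece_polygon P j : causal_chord (P j) (P j.+1) ->
  smooth_causal_piece (polygon P) j%:R j.+1%:R ((P j).1 < (P j.+1).1).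
Proof.
move=> [neq cone].
exists (segment (P j).1 (P j.+1).1 j), (fun i => segment ((P j).2 i) ((P j.+1).2 i) j).
split; first exact: smooth_segment.
split; first by move=> i; exact: smooth_segment.
split; first by move=> s /polygon_pieceE ->.
move=> s _; rewrite derive1_segment; split.
  by under eq_bigr => i _ do rewrite derive1_segment.
by case: ltgtP neq => //= lt _; rewrite ?subr_gt0 ?subr_lt0.
Qed.

Lemma piecewise_causal_polygon P k :
  causal_chain P k -> piecewise_causal (polygon P) 0 k%:R k (fun i => i%:R).
Proof.
move=> [k_gt0 chords]; split; first by rewrite ltr0n.
do 2 split => //; split; first by move=> i _; rewrite ltr_nat.
by move=> i /chords/smooth_causal_piece_polygon piece; eexists; exact: piece.
Qed.

End Polygon.

Lemma inf_eq_approx (R : realType) (A : set R) c : lbound A c ->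
  (forall e, 0 < e -> exists2 x, A x & x < c + e) -> inf A = c.
Proof.
move=> Ac approx; have [x Ax _] := approx 1 ltr01.
apply/eqP; rewrite eq_le (lb_le_inf _ Ac) ?andbT; last by exists x.
rewrite leNgt; apply/negP => cA.
have [y Ay] : exists2 y, A y & y < c + (inf A - c) by apply: approx; rewrite subr_gt0.
have := ge_inf (ex_intro _ c Ac) Ay; lra.
Qed.

Section NullLength.
Variables (R : realType) (n : nat).
Implicit Types (p q u v : mpoint R n) (P : nat -> mpoint R n).

Definition null_lengths p q : set R :=
  [set L : R | exists (beta : R -> mpoint R n) (a b : R) (k : nat) (s : nat -> R),
     piecewise_causal beta a b k s /\ beta a = p /\ beta b = q /\
     L = null_length beta k s].

Lemma null_length_ge (beta : R -> mpoint R n) k (s : nat -> R) :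
  `|tau (beta (s k)) - tau (beta (s 0%N))| <= null_length beta k s.
Proof.
rewrite -(telescope_sumr (fun i => tau (beta (s i)))) // big_mkord.
exact: ler_norm_sum.
Qed.

Lemma null_lengths_ge p q : lbound (null_lengths p q) `|tau q - tau p|.
Proof.
move=> _ [beta [a [b [k [s [[_ [<- [<- _]]] [<- [<- ->]]]]]]]].
exact: null_length_ge.
Qed.

Definition chain_length P (k : nat) : R := \sum_(i < k) `|tau (P i.+1) - tau (P i)|.

Lemma null_lengths_chain P k :
  causal_chain P k -> null_lengths (P 0%N) (P k) (chain_length P k).
Proof.
move=> chain; exists (polygon P), 0, k%:R, k, (fun i => i%:R).
split; first exact: piecewise_causal_polygon.
rewrite -[0]/(0%:R) !polygon_nat; do 2 split => //.
by apply: eq_bigr => i _; rewrite !polygon_nat.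
Qed.

Lemma dhat_eq_norm_tau p q :
  (forall e, 0 < e -> exists P k, [/\ causal_chain P k, P 0%N = p, P k = q &
     chain_length P k < `|tau q - tau p| + e]) ->
  dhat p q = `|tau q - tau p|.
Proof.
move=> approx; apply: inf_eq_approx; first exact: null_lengths_ge.
move=> e /approx [P [k [chain <- <- short]]].
by exists (chain_length P k); first exact: null_lengths_chain.
Qed.

End NullLength.

Section Chains.
Variables (R : realType) (n : nat).
Implicit Types (u v : mpoint R n) (P : nat -> mpoint R n).

Lemma causal_chord_vertical (t t' : R) (x : 'I_n -> R) :
  t != t' -> causal_chord (t, x) (t', x).
Proof.
move=> tt'; split => //=.
by rewrite big1 ?sqr_ge0 // => i _; rewrite subrr expr0n.
Qed.

Definition chain_cons u P (j : nat) : mpoint R n := if j is j'.+1 then P j' else u.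

Definition chain_rcons P (k : nat) v (j : nat) : mpoint R n :=
  if (j <= k)%N then P j else v.

Lemma causal_chain_cons u P k :
  causal_chord u (P 0%N) -> causal_chain P k -> causal_chain (chain_cons u P) k.+1.
Proof. by move=> uP [_ chords]; split=> // -[|i] // /chords. Qed.

Lemma chain_length_cons u P k :
  chain_length (chain_cons u P) k.+1 = `|tau (P 0%N) - tau u| + chain_length P k.
Proof. by rewrite /chain_length big_ord_recl. Qed.

Lemma causal_chain_rcons P k v :
  causal_chain P k -> causal_chord (P k) v -> causal_chain (chain_rcons P k v) k.+1.
Proof.
move=> [k_gt0 chords] Pv; split=> // i; rewrite ltnS leq_eqVlt => /orP[/eqP ->|ik].
  by rewrite /chain_rcons leqnn ltnn.
by rewrite /chain_rcons ik ltnW //; exact: chords.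
Qed.

Lemma chain_length_rcons P k v :
  chain_length (chain_rcons P k v) k.+1 = chain_length P k + `|tau v - tau (P k)|.
Proof.
rewrite /chain_length big_ord_recr /= /chain_rcons leqnn ltnn; congr (_ + _).
by apply: eq_bigr => i _; rewrite ltn_ord ltnW.
Qed.

End Chains.

Section Zigzag.
Variables (R : realType) (n : nat).
Variables (x y : 'I_n -> R) (N : nat).
Hypothesis N_gt0 : (0 < N)%N.

Definition sqdist : R := \sum_(i < n) (y i - x i) ^+ 2.

(* Each step of the zigzag moves |y - x| / 2N in space, so a height of order
   1/N keeps it causal; the summand 1 keeps the height positive when x = y. *)
Definition zigzag_height : R := (1 + sqdist) / N%:R.

Definition zigzag (j : nat) : mpoint R n :=
  (if odd j then zigzag_height else 0, fun i => x i + j%:R / N.*2%:R * (y i - x i)).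

Lemma sqdist_ge0 : 0 <= sqdist.
Proof. by apply: sumr_ge0 => i _; exact: sqr_ge0. Qed.

Lemma zigzag_height_gt0 : 0 < zigzag_height.
Proof. by apply: divr_gt0; [have := sqdist_ge0; lra | rewrite ltr0n]. Qed.

Lemma zigzag0 : zigzag 0 = (0, x).
Proof. by congr pair; apply/funext => i; rewrite mul0r mul0r addr0. Qed.

Lemma zigzag_double : zigzag N.*2 = (0, y).
Proof.
rewrite /zigzag odd_double; congr pair; apply/funext => i.
have N2_neq0 : N.*2%:R != 0 :> R by rewrite pnatr_eq0 double_eq0 -lt0n.
by rewrite divff // mul1r addrC subrK.
Qed.

Lemma causal_chord_zigzag j : causal_chord (zigzag j) (zigzag j.+1).
Proof.
have h_gt0 := zigzag_height_gt0; have S_ge0 := sqdist_ge0.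
have w_gt0 : 0 < N%:R^-1 :> R by rewrite invr_gt0 ltr0n.
rewrite /causal_chord.
have -> : \sum_(i < n) ((zigzag j.+1).2 i - (zigzag j).2 i) ^+ 2
          = sqdist * (N%:R^-1 / 2) ^+ 2.
  rewrite /sqdist mulr_suml; apply: eq_bigr => i _ /=.
  rewrite -natr1 -muln2 natrM invfM; ring.
have cone : sqdist * (N%:R^-1 / 2) ^+ 2 <= zigzag_height ^+ 2.
  rewrite /zigzag_height -[_ / N%:R]/(_ * N%:R^-1); move: (N%:R^-1) w_gt0 => w w_gt0; nra.
rewrite /=; case: (odd j); rewrite /= ?subr0 ?sub0r ?sqrrN; split=> //.
  by rewrite gt_eqF.
by rewrite lt_eqF.
Qed.

Lemma causal_chain_zigzag : causal_chain zigzag N.*2.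
Proof. by split; [rewrite double_gt0 | move=> j _; exact: causal_chord_zigzag]. Qed.

Lemma chain_length_zigzag : chain_length zigzag N.*2 = zigzag_height ^+ 3 *+ N.*2.
Proof.
rewrite /chain_length (eq_bigr (fun=> zigzag_height ^+ 3)) ?sumr_const ?card_ord //.
move=> j _; have h3_gt0 := exprn_gt0 3 zigzag_height_gt0.
by rewrite /tau /=; case: (odd j); rewrite expr0n ?subr0 ?sub0r ?normrN gtr0_norm.
Qed.

End Zigzag.

Section Slice.
Variables (R : realType) (n : nat).
Implicit Types (p q : mpoint R n).

Lemma zigzag_short (x y : 'I_n -> R) e : 0 < e ->
  exists N, (0 < N)%N /\ zigzag_height x y N ^+ 3 *+ N.*2 < e.
Proof.
move=> e_gt0; set C := 2 * (1 + sqdist x y) ^+ 3.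
have C_gt0 : 0 < C by rewrite mulr_gt0 // exprn_gt0 //; have := sqdist_ge0 x y; lra.
exists (Num.truncn (C / e)).+1; split=> //; set N := (Num.truncn (C / e)).+1.
have N_ge1 : 1 <= N%:R :> R by rewrite ler1n.
have Ce_lt : C / e < N%:R by exact: truncnS_gt.
have -> : zigzag_height x y N ^+ 3 *+ N.*2 = C / N%:R / N%:R.
  rewrite /zigzag_height -mulr_natr -muln2 natrM /C.
  by field; rewrite pnatr_eq0.
rewrite ltr_pdivrMr // in Ce_lt.
rewrite !ltr_pdivrMr ?(lt_le_trans ltr01) //; nra.
Qed.

Lemma slice0_chain_short (x y : 'I_n -> R) e : 0 < e ->
  exists P k, [/\ causal_chain P k, P 0%N = (0, x), P k = (0, y) & chain_length P k < e].
Proof.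
move=> /(zigzag_short x y) [N [N_gt0 short]].
exists (zigzag x y N), N.*2; split.
- exact: causal_chain_zigzag.
- exact: zigzag0.
- exact: zigzag_double.
- by rewrite chain_length_zigzag.
Qed.

Lemma dhat_slice0 p q : p.1 = 0 -> q.1 = 0 -> dhat p q = 0.
Proof.
case: p q => [t x] [t' y] /= -> ->.
have tau0 : `|tau (0 : R, y) - tau (0, x)| = 0 by rewrite /tau expr0n subrr normr0.
rewrite -[RHS]tau0; apply: dhat_eq_norm_tau => e /(slice0_chain_short x y) [P [k chain]].
by rewrite tau0 add0r; exists P, k.
Qed.

Lemma dhat_across_slice0 p q : p.1 < 0 < q.1 -> dhat p q = tau q - tau p.
Proof.
case: p q => [t x] [t' y] /= /andP[t_lt0 t'_gt0].
have tau_lt0 : tau (t, x) < 0 by rewrite /tau exprn_odd_lt0.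
have tau_gt0 : 0 < tau (t', y) by rewrite /tau exprn_gt0.
have dtau : `|tau (t', y) - tau (t, x)| = tau (t', y) - tau (t, x).
  by rewrite gtr0_norm // subr_gt0 (lt_trans tau_lt0).
rewrite -[RHS]dtau.
apply: dhat_eq_norm_tau => e /(slice0_chain_short x y) [P [k [chain P0 Pk short]]].
exists (chain_rcons (chain_cons (t, x) P) k.+1 (t', y)), k.+2; split.
- apply: causal_chain_rcons; last by rewrite /= Pk; apply: causal_chord_vertical; rewrite lt_eqF.
  by apply: causal_chain_cons => //; rewrite P0; apply: causal_chord_vertical; rewrite lt_eqF.
- by [].
- by rewrite /chain_rcons ltnn.
- rewrite dtau chain_length_rcons chain_length_cons /= P0 Pk.
  move: tau_lt0 tau_gt0; rewrite /tau /= expr0n /= sub0r subr0 normrN => ? ?.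
  rewrite ltr0_norm // gtr0_norm //; lra.
Qed.

End Slice.

Theorem proposition3p4 (R : realType) (n : nat) :
  ((forall p q : mpoint R n, p.1 = 0 -> q.1 = 0 -> dhat p q = 0) /\
   ((0 < n)%N -> exists p q : mpoint R n, p <> q /\ dhat p q = 0)) /\
  (forall p q : mpoint R n, p.1 < 0 < q.1 -> dhat p q = tau q - tau p).
Proof.
split; [split|]; first exact: dhat_slice0.
- move=> n_gt0; exists (0, fun=> 0), (0, fun=> 1); split; last exact: dhat_slice0.
  by case=> /(congr1 (fun x => x (Ordinal n_gt0)))/eqP; rewrite eq_sym oner_eq0.
- exact: dhat_across_slice0.
Qed.
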